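(* Let $S=\mathbb{C}[w,x,y,z]$ with its standard grading, let $f\in S$ be homogeneous, let $J=(f_w,f_x,f_y,f_z)\subset S$ be its Jacobian ideal, and let $p_1,\dots,p_r\in\mathbb{C}^4\setminus\{0\}$ be points. Let $M\ge 1$ and let $D_1,\dots,D_M$ be linear functionals on $S$ of the form $D_j(h)=\sum_{\alpha\in A_j}c_{j,\alpha}\,(\partial^{\alpha}h)(p_{i(j)})$, where $i(j)\in\{1,\dots,r\}$, $A_j\subset\mathbb{Z}_{\ge0}^4$ is finite and $c_{j,\alpha}\in\mathbb{C}\setminus\{0\}$. Let $m_0$ be an integer and assume: (i) for every $m\ge m_0$ and every homogeneous $h\in S_m$, one has $h\in J$ if and only if $D_j(h)=0$ for all $j=1,\dots,M$; (ii) $\dim_{\mathbb{C}}(S/J)_m=M$ for every $m\ge m_0$. Let $L\in S$ be homogeneous of degree $e\ge 0$ such that $L(p_i)\neq 0$ for all $i$, and such that for every $j$, every $\alpha\in A_j$ and every multi-index $\beta\neq 0$ with $\beta\le\alpha$ componentwise, $(\partial^{\beta}L)(p_{i(j)})=0$. Then for every $m\ge m_0$, multiplication by $L$ induces a well-defined isomorphism $(S/J)_m\to(S/J)_{m+e}$; in particular, a homogeneous $h$ of degree $m\ge m_0$ with $h\notin J$ satisfies $hL\notin J$, and if the classes of $h_1,\dots,h_M\in S_m$ form a basis of $(S/J)_m$, then the classes of $Lh_1,\dots,Lh_M$ form a basis of $(S/J)_{m+e}$.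
   Context: For $\alpha=(\alpha_0,\alpha_1,\alpha_2,\alpha_3)\in\mathbb{Z}_{\ge0}^4$, $\partial^{\alpha}=\frac{\partial^{\alpha_0}}{\partial w^{\alpha_0}}\frac{\partial^{\alpha_1}}{\partial x^{\alpha_1}}\frac{\partial^{\alpha_2}}{\partial y^{\alpha_2}}\frac{\partial^{\alpha_3}}{\partial z^{\alpha_3}}$, and $(\partial^\alpha h)(p)$ denotes this derivative evaluated at the point $p$. $(S/J)_m$ denotes the degree-$m$ graded piece of the graded quotient ring $S/J$. In the intended application $f$ defines a surface in $\mathbb{P}^3$ with ADE singularities, $p_i$ are representatives of its singular points, $M$ is the global Milnor number (sum of Milnor numbers), $D_j$ are the differential operators characterizing the Jacobian ideal near the singular points, and $m_0=3(\deg f-2)$. *)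

(* multinomials' {mpoly _} over C := R[i] (complex numbers of
   a realType R, i.e. a model of the complex numbers). *)
From HB Require Import structures.
From mathcomp Require Import all_boot all_algebra.
From mathcomp Require Import reals.
From mathcomp.real_closed Require Import complex.
From mathcomp Require Import mpoly.
Set Implicit Arguments. Unset Strict Implicit. Unset Printing Implicit Defensive.
Import GRing.Theory.
Local Open Scope ring_scope.

(* S = C[w,x,y,z] : variables indexed by 'I_4 (0 = w, 1 = x, 2 = y, 3 = z). *)
Notation Spoly C := {mpoly C[4]}.

Definition inJac {C : fieldType} (f h : Spoly C) : Prop :=
  exists g : 'I_4 -> Spoly C, h = \sum_(k < 4) g k * f^`M(k).

(* S_m : homogeneous polynomials of degree m (0 included). *)
Definition inS {C : fieldType} (m : nat) (h : Spoly C) : Prop :=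
  h \is m.-homog.

(* The classes of hs : 'I_n -> S_m form a basis of (S/J)_m = S_m / (J ∩ S_m). *)
Definition quot_basis {C : fieldType} (f : Spoly C) (m n : nat)
    (hs : 'I_n -> Spoly C) : Prop :=
  [/\ forall k, inS m (hs k),
      (forall c : 'I_n -> C,
          inJac f (\sum_(k < n) c k *: hs k) -> forall k, c k = 0) &
      (forall g, inS m g ->
          exists c : 'I_n -> C, inJac f (g - \sum_(k < n) c k *: hs k))].

Definition quot_dim {C : fieldType} (f : Spoly C) (m n : nat) : Prop :=
  exists hs : 'I_n -> Spoly C, quot_basis f m hs.

Definition dereval {C : fieldType} (alpha : 'X_{1..4}) (h : Spoly C)
    (p : 'I_4 -> C) : C :=
  (h^`M[alpha]).@[p].

Definition Dfun {C : fieldType} {r M : nat} (p : 'I_r -> 'I_4 -> C)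
    (idx : 'I_M -> 'I_r) (A : 'I_M -> seq 'X_{1..4})
    (c : 'I_M -> 'X_{1..4} -> C) (j : 'I_M) (h : Spoly C) : C :=
  \sum_(alpha <- A j) c j alpha * dereval alpha h (p (idx j)).

From HB Require Import structures.
From mathcomp Require Import all_boot all_order all_algebra.
From mathcomp Require Import reals.
From mathcomp.real_closed Require Import complex.
From mathcomp Require Import mpoly.
From mathcomp Require Import ring.
Import Order.TTheory GRing.Theory Num.Theory.
Local Open Scope ring_scope.

(* By the Leibniz rule, ∂^a (h L) - (∂^a h) L is a combination of the
   derivatives ∂^b L with 0 < b <= a, all of which vanish at the relevant
   point; hence D_j (h L) = L(p_{i(j)}) D_j h.  As L(p_i) <> 0, condition (i)
   shows that multiplication by L is injective from (S/J)_m to (S/J)_{m+e}.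
   Both spaces have dimension M by (ii), so the map is bijective: the matrix
   expressing the L h_k in a basis of (S/J)_{m+e} has trivial kernel. *)

Section LeibnizRule.
Context {C : fieldType}.
Variable L : {mpoly C[4]}.

Inductive lower_deriv_comb (a : 'X_{1..4}) : {mpoly C[4]} -> Prop :=
| LDC0 : lower_deriv_comb a 0
| LDCadd g1 g2 :
    lower_deriv_comb a g1 -> lower_deriv_comb a g2 -> lower_deriv_comb a (g1 + g2)
| LDCterm q b : b != 0%MM -> (b <= a)%MM -> lower_deriv_comb a (q * L^`M[b]).

Lemma lower_deriv_comb_mderiv a i g :
  lower_deriv_comb a g -> lower_deriv_comb (a + U_(i))%MM (g^`M(i)).
Proof.
elim=> [|g1 g2 _ IH1 _ IH2|q b b_neq0 b_le].
- by rewrite mderiv0; constructor.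
- by rewrite mderivD; constructor.
rewrite mderivM -[(L^`M[b])^`M(i)]mderivmU1m -mderivmDm.
apply: LDCadd; apply: LDCterm => //.
- by apply: lepm_trans b_le _; apply/mnm_lepP => k; rewrite mnmDE leq_addr.
- by rewrite mnmD_eq0 negb_and b_neq0.
- by apply/mnm_lepP => k; rewrite !mnmDE leq_add2r; apply/mnm_lepP.
Qed.

Lemma lower_deriv_comb_meval a g (v : 'I_4 -> C) :
  (forall b, b != 0%MM -> (b <= a)%MM -> (L^`M[b]).@[v] = 0) ->
  lower_deriv_comb a g -> g.@[v] = 0.
Proof.
move=> L_vanish; elim=> [|g1 g2 _ IH1 _ IH2|q b b_neq0 b_le].
- by rewrite meval0.
- by rewrite mevalD IH1 IH2 addr0.
- by rewrite mevalM L_vanish // mulr0.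
Qed.

Lemma mderivm_mulr_lower a h :
  lower_deriv_comb a ((h * L)^`M[a] - h^`M[a] * L).
Proof.
elim: {a}(mdeg a) {-2}a (erefl (mdeg a)) => [|n IH] a deg_a.
  have -> : a = 0%MM by apply/eqP; rewrite -mdeg_eq0 deg_a.
  by rewrite !mderivm0m subrr; constructor.
have [i ai_gt0|a_eq0] := pickP (fun i => 0 < a i)%N; last first.
  suff a0 : a = 0%MM by rewrite a0 mdeg0 in deg_a.
  by apply/mnmP => k; move/negbT: (a_eq0 k); rewrite mnm0E lt0n negbK => /eqP.
have Ui_le : (U_(i) <= a)%MM.
  by apply/mnm_lepP => k; rewrite mnm1E; case: eqP => [<-|].
set a' := (a - U_(i))%MM.
have a_split : a = (a' + U_(i))%MM by rewrite /a' submK.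
have deg_a' : mdeg a' = n by move: deg_a; rewrite a_split mdegD mdeg1 addn1 => -[].
have -> : (h * L)^`M[a] - h^`M[a] * L =
    ((h * L)^`M[a'] - h^`M[a'] * L)^`M(i) + h^`M[a'] * L^`M[U_(i)].
  by rewrite a_split !mderivmDm !mderivmU1m mderivB mderivM; ring.
apply: LDCadd; first by rewrite a_split; apply/lower_deriv_comb_mderiv/IH.
by apply: LDCterm; rewrite ?mnm1_eq0.
Qed.

End LeibnizRule.

Lemma Dfun_mulr {C : fieldType} {L : {mpoly C[4]}} {r M : nat}
    {p : 'I_r -> 'I_4 -> C} {idx : 'I_M -> 'I_r} {A : 'I_M -> seq 'X_{1..4}}
    {c : 'I_M -> 'X_{1..4} -> C} :
  (forall j alpha beta, alpha \in A j -> beta != 0%MM ->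
     (forall k, (beta k <= alpha k)%N) -> dereval beta L (p (idx j)) = 0) ->
  forall j h, Dfun p idx A c j (h * L) = L.@[p (idx j)] * Dfun p idx A c j h.
Proof.
move=> L_vanish j h; rewrite /Dfun mulr_sumr !big_seq; apply: eq_bigr => a a_in.
suff : ((h * L)^`M[a] - h^`M[a] * L).@[p (idx j)] = 0.
  by rewrite /dereval mevalB mevalM => /eqP; rewrite subr_eq0 => /eqP ->; ring.
apply: lower_deriv_comb_meval (mderivm_mulr_lower L a h) => b b_neq0 /mnm_lepP.
exact: L_vanish.
Qed.

Section JacobianIdeal.
Context {C : fieldType} {f : {mpoly C[4]}}.

Lemma inJac0 : inJac f 0.
Proof. by exists (fun=> 0); rewrite big1 // => k _; rewrite mul0r. Qed.

Lemma inJacD {g h} : inJac f g -> inJac f h -> inJac f (g + h).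
Proof.
move=> [a ->] [b ->]; exists (fun k => a k + b k); rewrite -big_split.
by apply: eq_bigr => k _; rewrite mulrDl.
Qed.

Lemma inJacMl q {g} : inJac f g -> inJac f (q * g).
Proof.
move=> [a ->]; exists (fun k => q * a k); rewrite mulr_sumr.
by apply: eq_bigr => k _; rewrite mulrA.
Qed.

Lemma inJacMr q {g} : inJac f g -> inJac f (g * q).
Proof. by rewrite mulrC; apply: inJacMl. Qed.

Lemma inJacZ a {g} : inJac f g -> inJac f (a *: g).
Proof. by rewrite -mul_mpolyC; apply: inJacMl. Qed.

Lemma inJacB {g h} : inJac f g -> inJac f h -> inJac f (g - h).
Proof. by move=> Jg Jh; rewrite -scaleN1r; apply/inJacD/inJacZ. Qed.

Lemma inJac_sum (I : Type) (s : seq I) (P : pred I) F :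
  (forall i, P i -> inJac f (F i)) -> inJac f (\sum_(i <- s | P i) F i).
Proof.
move=> JF; apply: (big_rec (inJac f)); first exact: inJac0.
by move=> i x Pi Jx; apply/inJacD/Jx/JF.
Qed.

Lemma inS_lincomb m n (c : 'I_n -> C) hs : (forall k, inS m (hs k)) ->
  inS m (\sum_(k < n) c k *: hs k).
Proof.
move=> hs_homog; apply: (big_rec (inS m)); first exact: dhomog0.
by move=> k x _ x_homog; apply: dhomogD x_homog; apply/dhomogZ/hs_homog.
Qed.

End JacobianIdeal.

Section MulQuotient.
Context {C : fieldType} {f L : {mpoly C[4]}} {m m' n : nat}.
Hypothesis mulL_inj : forall h, inS m h -> inJac f (h * L) -> inJac f h.
Hypothesis mulL_homog : forall h, inS m h -> inS m' (h * L).

Lemma lincomb_mulL (hs : 'I_n -> {mpoly C[4]}) (c : 'I_n -> C) :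
  \sum_k c k *: (L * hs k) = (\sum_k c k *: hs k) * L.
Proof. by rewrite mulr_suml; apply: eq_bigr => k _; rewrite -scalerAl mulrC. Qed.

Lemma quot_free_mulL {hs : 'I_n -> {mpoly C[4]}} : quot_basis f m hs ->
  forall c, inJac f (\sum_k c k *: (L * hs k)) -> forall k, c k = 0.
Proof.
move=> [hs_homog hs_free _] c; rewrite lincomb_mulL => /mulL_inj J_lincomb.
exact/hs_free/J_lincomb/inS_lincomb.
Qed.

Lemma lincomb_mulmx (gs : 'I_n -> {mpoly C[4]}) (a : 'I_n -> 'I_n -> C)
    (v : 'rV[C]_n) :
  \sum_k v 0 k *: \sum_l a k l *: gs l
  = \sum_l (v *m \matrix_(k, l) a k l) 0 l *: gs l.
Proof.
under eq_bigr do rewrite scaler_sumr.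
rewrite exchange_big; apply: eq_bigr => l _ /=.
rewrite mxE scaler_suml; apply: eq_bigr => k _.
by rewrite mxE scalerA.
Qed.

Section Transition.
Context {hs gs : 'I_n -> {mpoly C[4]}} {a : 'I_n -> 'I_n -> C}.
Hypothesis transition : forall k, inJac f (L * hs k - \sum_l a k l *: gs l).

Lemma inJac_lincomb_transition (v : 'rV[C]_n) :
  inJac f (\sum_k v 0 k *: (L * hs k)
           - \sum_l (v *m \matrix_(k, l) a k l) 0 l *: gs l).
Proof.
rewrite -lincomb_mulmx -sumrB.
apply: inJac_sum => k _; rewrite -scalerBr; exact/inJacZ/transition.
Qed.

Lemma transition_unitmx : quot_basis f m hs -> \matrix_(k, l) a k l \in unitmx.
Proof.
move=> hs_basis; rewrite -row_free_unit -kermx_eq0; apply/eqP/row_matrixP => i.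
rewrite row0; set u := row i (kermx _).
have uA : u *m \matrix_(k, l) a k l = 0 by rewrite /u -row_mul mulmx_ker row0.
apply/rowP => k; rewrite [RHS]mxE.
apply: (quot_free_mulL hs_basis (fun k => u 0 k)).
have := inJac_lincomb_transition u; rewrite uA.
by under [X in _ - X]eq_bigr do rewrite mxE scale0r; rewrite big1_eq subr0.
Qed.

End Transition.

Lemma mulL_surj {hs gs : 'I_n -> {mpoly C[4]}} :
  quot_basis f m hs -> quot_basis f m' gs ->
  forall g, inS m' g -> exists h, inS m h /\ inJac f (g - h * L).
Proof.
move=> hs_basis [_ _ gs_span].
have /fin_all_exists [a transition] : forall k, exists a : 'I_n -> C,
    inJac f (L * hs k - \sum_l a l *: gs l).
  by move=> k; apply: gs_span; rewrite mulrC; apply: mulL_homog; case: hs_basis.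
have A_unit := transition_unitmx transition hs_basis.
move=> g /gs_span [b Jg_b].
set d := \row_l b l *m invmx (\matrix_(k, l) a k l).
exists (\sum_k d 0 k *: hs k); split; first by apply: inS_lincomb; case: hs_basis.
have dA : d *m \matrix_(k, l) a k l = \row_l b l by rewrite mulmxKV.
have := inJac_lincomb_transition transition d; rewrite dA lincomb_mulL.
under [X in _ - X]eq_bigr do rewrite mxE.
move=> J_d; have := inJacB Jg_b J_d.
by rewrite opprB addrA subrK.
Qed.

Lemma quot_basis_mulL {hs gs : 'I_n -> {mpoly C[4]}} :
  quot_basis f m hs -> quot_basis f m' gs ->
  quot_basis f m' (fun k => L * hs k).
Proof.
move=> hs_basis gs_basis; have [hs_homog _ hs_span] := hs_basis.
split.
- by move=> k; rewrite mulrC; apply: mulL_homog.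
- exact: quot_free_mulL.
move=> g /(mulL_surj hs_basis gs_basis) [h [h_homog Jg_h]].
have [c Jh_c] := hs_span h h_homog; exists c.
rewrite lincomb_mulL.
have -> : g - (\sum_k c k *: hs k) * L
          = (g - h * L) + (h - \sum_k c k *: hs k) * L.
  by ring.
exact/inJacD/inJacMr.
Qed.

End MulQuotient.

Theorem theorem3p7 (R : realType) (f : {mpoly R[i][4]}) (d : nat)
  (r M : nat) (p : 'I_r -> 'I_4 -> R[i])
  (idx : 'I_M -> 'I_r) (A : 'I_M -> seq 'X_{1..4})
  (c : 'I_M -> 'X_{1..4} -> R[i]) (m0 : int)
  (L : {mpoly R[i][4]}) (e : nat) :
  f \is d.-homog ->
  (forall i, exists k, p i k != 0) ->
  (0 < M)%N ->
  (forall j, uniq (A j)) ->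
  (forall j alpha, alpha \in A j -> c j alpha != 0) ->
  (* (i) *)
  (forall m : nat, m0 <= m%:Z -> forall h, inS m h ->
     (inJac f h <-> forall j, Dfun p idx A c j h = 0)) ->
  (* (ii) *)
  (forall m : nat, m0 <= m%:Z -> quot_dim f m M) ->
  L \is e.-homog ->
  (forall i, L.@[p i] != 0) ->
  (forall j alpha beta, alpha \in A j -> beta != 0%MM ->
     (forall k, (beta k <= alpha k)%N) ->
     dereval beta L (p (idx j)) = 0) ->
  forall m : nat, m0 <= m%:Z ->
  [/\ (* well defined *)
      (forall h, inS m h -> inJac f h -> inJac f (h * L)),
      (* injective (in particular h ∉ J ⇒ hL ∉ J) *)
      (forall h, inS m h -> inJac f (h * L) -> inJac f h),
      (* surjective *)
      (forall g, inS (m + e) g -> exists h, inS m h /\ inJac f (g - h * L)) &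
      (* bases are mapped to bases *)
      (forall hs : 'I_M -> {mpoly R[i][4]}, quot_basis f m hs ->
         quot_basis f (m + e) (fun k => L * hs k))].
Proof.
move=> _ _ _ _ _ Jac_D dimJ L_homog L_p_neq0 L_vanish m m_ge.
have me_ge : m0 <= (m + e)%N%:Z by apply: le_trans m_ge _; rewrite lez_nat leq_addr.
have mulL_homog h : inS m h -> inS (m + e) (h * L) by move/dhomogM; apply.
have mulL_inj h : inS m h -> inJac f (h * L) -> inJac f h.
  move=> h_homog /(Jac_D _ me_ge _ (mulL_homog h h_homog)) D_hL.
  apply/(Jac_D _ m_ge _ h_homog) => j; move: (D_hL j).
  rewrite (Dfun_mulr L_vanish) => /eqP.
  by rewrite mulf_eq0 (negbTE (L_p_neq0 _)) => /eqP.
have [hs hs_basis] := dimJ m m_ge.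
have [gs gs_basis] := dimJ (m + e)%N me_ge.
split=> [h _|||hs' hs'_basis]; first exact: inJacMr.
- exact: mulL_inj.
- exact: (mulL_surj mulL_inj mulL_homog hs_basis gs_basis).
- exact: (quot_basis_mulL mulL_inj mulL_homog hs'_basis gs_basis).
Qed.
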